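(* Let $a, b, n$ be positive integers with $b>1$, $n>1$ and $\gcd(r_b(n),a)=1$. Then the numerical semigroup $S_a(b,n)$ is homogeneous.
   Context: For an integer $\ell \ge 1$, $r_b(\ell) = \sum_{j=0}^{\ell-1} b^j$, and $r_b(0)=0$. For $i \ge 1$, $a_i := r_b(n) + a\, r_b(i-1)$; $S_a(b,n)$ is the numerical semigroup generated by $\{a_i\}$, minimally generated by $a_1,\ldots,a_n$. For a numerical semigroup $S$ minimally generated by $\{g_1,\ldots,g_e\}$ and $s\in S$, the set of lengths is $\mathsf{L}_S(s) = \{\sum_j u_j : s = \sum_j u_j g_j,\ u_j \in \mathbb{N}\}$. $S$ is homogeneous if $\mathsf{L}_S(s)$ is a singleton for every $s \in \operatorname{Ap}(S) = \{\omega\in S: \omega - \operatorname{m}(S)\notin S\}$, with $\operatorname{m}(S)$ the multiplicity (smallest nonzero element). *)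

From mathcomp Require Import all_boot.
Set Implicit Arguments. Unset Strict Implicit. Unset Printing Implicit Defensive.

Definition rb (b l : nat) : nat := \sum_(j < l) b ^ j.

(* a_i = r_b(n) + a * r_b(i-1), i >= 1.  We index by i : 'I_n with
   Sgen a b n i = a_{i+1}, so Sgen ranges over a_1, ..., a_n. *)
Definition Sgen (a b n : nat) (i : 'I_n) : nat := rb b n + a * rb b i.

Definition in_sgrp (e : nat) (g : 'I_e -> nat) (s : nat) : Prop :=
  exists u : 'I_e -> nat, s = \sum_(j < e) u j * g j.

Definition is_multiplicity (e : nat) (g : 'I_e -> nat) (m : nat) : Prop :=
  [/\ in_sgrp g m, 0 < m & forall s, in_sgrp g s -> 0 < s -> m <= s].

(* Apery set of S with respect to m: w in S and w - m not in S
   (w - m is an integer; it is not in S in particular when w < m). *)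
Definition in_apery (e : nat) (g : 'I_e -> nat) (m w : nat) : Prop :=
  in_sgrp g w /\ ~ (exists t, in_sgrp g t /\ w = t + m).

Definition in_lengths (e : nat) (g : 'I_e -> nat) (s l : nat) : Prop :=
  exists u : 'I_e -> nat, s = \sum_(j < e) u j * g j /\ l = \sum_(j < e) u j.

Definition homogeneous (e : nat) (g : 'I_e -> nat) : Prop :=
  forall m, is_multiplicity g m ->
  forall w, in_apery g m w ->
  exists l, forall l', in_lengths g w l' <-> l' = l.

(* Write a_i = r + a r_b(i-1) with r = r_b(n) = a_1, the multiplicity.  A
   factorization u of s gives s = L r + a X with L = sum u_i its length and
   X = sum u_i r_b(i-1) its weight.  Since r_b(j+1) = 1 + b r_b(j), a
   factorization of weight X >= r can be traded for one of length L - 1 and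
   weight X - r; then s - r = (L - 1 + a) r + a (X - r) lies in S, so s is not
   in Ap(S, r).  Hence Apery elements only have factorizations of weight
   X < r, and as a is invertible modulo r the equation L r + a X = s then
   determines X and therefore L. *)
From mathcomp Require Import all_boot.
From mathcomp Require Import zify.

Set Implicit Arguments.
Unset Strict Implicit.
Unset Printing Implicit Defensive.

Lemma rb0 b : rb b 0 = 0.
Proof. by rewrite /rb big_ord0. Qed.

Lemma rbS b j : rb b j.+1 = 1 + b * rb b j.
Proof.
rewrite /rb big_ord_recl expn0 big_distrr; congr (_ + _).
by apply: eq_bigr => i _; rewrite lift0 expnS.
Qed.

Lemma rb_gt0 b m : 0 < m -> 0 < rb b m.
Proof. by case: m => // m _; rewrite rbS. Qed.

Section Weight.

Variable b : nat.

Definition len m (u : 'I_m -> nat) : nat := \sum_(j < m) u j.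

Definition weight m (u : 'I_m -> nat) : nat := \sum_(j < m) u j * rb b j.

Definition vtail m (u : 'I_m.+1 -> nat) : 'I_m -> nat :=
  fun i => u (lift ord0 i).

Definition vcons m (c : nat) (v : 'I_m -> nat) : 'I_m.+1 -> nat :=
  fun j => if unlift ord0 j is Some i then v i else c.

Lemma lenS m (u : 'I_m.+1 -> nat) : len u = u ord0 + len (vtail u).
Proof. by rewrite /len big_ord_recl. Qed.

Lemma weightS m (u : 'I_m.+1 -> nat) :
  weight u = len (vtail u) + b * weight (vtail u).
Proof.
rewrite /weight big_ord_recl rb0 muln0 add0n big_distrr -big_split.
by apply: eq_bigr => i _; rewrite lift0 rbS mulnDr muln1 mulnCA.
Qed.

Lemma vtail_vcons m c (v : 'I_m -> nat) : vtail (vcons c v) =1 v.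
Proof. by move=> i; rewrite /vtail /vcons liftK. Qed.

Lemma len_vcons m c (v : 'I_m -> nat) : len (vcons c v) = c + len v.
Proof.
rewrite lenS /vcons unlift_none; congr (_ + _).
by apply: eq_bigr => i _; rewrite vtail_vcons.
Qed.

Lemma weight_vcons m c (v : 'I_m -> nat) :
  weight (vcons c v) = len v + b * weight v.
Proof.
rewrite weightS; congr (_ + b * _);
  by apply: eq_bigr => i _; rewrite vtail_vcons.
Qed.

Lemma len0 m : len (fun _ : 'I_m => 0) = 0.
Proof. exact: big1. Qed.

Lemma weight0 m : weight (fun _ : 'I_m => 0) = 0.
Proof. exact: big1. Qed.

Lemma weight_len0 m (u : 'I_m -> nat) : len u = 0 -> weight u = 0.
Proof.
move/eqP; rewrite /len sum_nat_eq0 => /forall_inP u0.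
by apply: big1 => j _; rewrite (eqP (u0 j isT)).
Qed.

(* Peel off the coefficient of r_b(0) and use r_b(j+1) = 1 + b r_b(j).  If the
   tail still has weight Z >= r_b(m) recurse; otherwise the deficit
   b (r_b(m) - Z) goes to the coefficient of r_b(0) = 0 and the rest of the
   length to the coefficient of r_b(1) = 1. *)
Lemma weight_carry m (u : 'I_m.+1 -> nat) : rb b m.+1 <= weight u ->
  exists v : 'I_m.+1 -> nat,
    (len v).+1 = len u /\ weight v + rb b m.+1 = weight u.
Proof.
elim: m u => [|m IHm] u.
  by rewrite weightS /len /weight !big_ord0 rbS rb0 muln0.
rewrite [len u]lenS weightS rbS.
set N := len (vtail u); set Z := weight (vtail u) => le_rb_u.
have [le_rb_Z | lt_Z_rb] := leqP (rb b m.+1) Z.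
  have [v [lenv weightv]] := IHm _ le_rb_Z.
  exists (vcons (u ord0) v); rewrite len_vcons weight_vcons.
  by rewrite -/N -/Z in lenv weightv; split; lia.
pose D := rb b m.+1 - Z.
have le_bD_N : 1 + b * D <= N by move: le_rb_u; rewrite /D mulnBr; lia.
exists (vcons (u ord0 + b * D) (vcons (N - 1 - b * D) (fun _ : 'I_m => 0))).
rewrite len_vcons weight_vcons len_vcons weight_vcons len0 weight0.
by move: le_rb_u; rewrite /D mulnBr; split; lia.
Qed.

End Weight.

Lemma sum_Sgen a b n (u : 'I_n -> nat) :
  \sum_(j < n) u j * @Sgen a b n j = len u * rb b n + a * weight b u.
Proof.
rewrite /len /weight big_distrl big_distrr -big_split /=.
by apply: eq_bigr => j _; rewrite /Sgen mulnDr mulnCA.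
Qed.

Lemma multiplicity_unique e (g : 'I_e -> nat) m1 m2 :
  is_multiplicity g m1 -> is_multiplicity g m2 -> m1 = m2.
Proof.
move=> [S1 pos1 min1] [S2 pos2 min2].
by apply/eqP; rewrite eqn_leq min1 // min2.
Qed.

Lemma Sgen_multiplicity a b n : 0 < n -> is_multiplicity (@Sgen a b n) (rb b n).
Proof.
case: n => // n _; split.
- exists (vcons 1 (fun _ => 0)).
  by rewrite sum_Sgen len_vcons weight_vcons len0 weight0 !muln0 !addn0 mul1n.
- by rewrite rb_gt0.
move=> s [u ->]; rewrite sum_Sgen.
have [len_u0 | len_u_gt0] := posnP (len u).
  by rewrite (weight_len0 b len_u0) len_u0 mul0n muln0.
move=> _; apply: leq_trans (leq_addr _ _).
by rewrite leq_pmull.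
Qed.

Lemma apery_weight_lt a b n w (v : 'I_n -> nat) : 0 < n ->
  in_apery (@Sgen a b n) (rb b n) w -> w = \sum_(j < n) v j * @Sgen a b n j ->
  weight b v < rb b n.
Proof.
case: n v => // n v _ [_ not_w_sub_r] w_v.
rewrite ltnNge; apply/negP => /weight_carry [v' [lenv' weightv']].
apply: not_w_sub_r.
exists (\sum_(j < n.+1) vcons (v' ord0 + a) (vtail v') j * @Sgen a b n.+1 j).
split; first by eexists.
rewrite w_v !sum_Sgen len_vcons weight_vcons -weightS -weightv' -lenv' lenS.
lia.
Qed.

Lemma coprime_lincomb_inj r a L1 L2 X1 X2 : 0 < r -> coprime r a ->
  X1 < r -> X2 < r -> L1 * r + a * X1 = L2 * r + a * X2 -> L1 = L2.
Proof.
move=> r_gt0 co_ra.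
wlog le_X12 : L1 L2 X1 X2 / X1 <= X2.
  move=> wlog_le lt1 lt2 E; have [le12 | /ltnW le21] := leqP X1 X2.
    exact: wlog_le le12 lt1 lt2 E.
  exact/esym/(wlog_le _ _ _ _ le21 lt2 lt1 (esym E)).
move=> _ lt2 E.
have dvd_r : r %| X2 - X1.
  rewrite -(Gauss_dvdr _ co_ra) mulnBr.
  have -> : a * X2 - a * X1 = (L1 - L2) * r by rewrite mulnBl; lia.
  exact: dvdn_mull.
have X12 : X1 = X2.
  apply/eqP; rewrite eqn_leq le_X12 leqNgt -subn_gt0; apply/negP => X_gap.
  by have := dvdn_leq X_gap dvd_r; lia.
by apply/eqP; rewrite -(eqn_pmul2r r_gt0); move: E; rewrite X12; lia.
Qed.

Theorem proposition17 (a b n : nat) :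
  0 < a -> 1 < b -> 1 < n -> coprime (rb b n) a ->
  @homogeneous n (@Sgen a b n).
Proof.
move=> _ _ n_gt1 co_ra m mult_m w.
have n_gt0 : 0 < n by lia.
rewrite (multiplicity_unique mult_m (Sgen_multiplicity a b n_gt0)) => apery_w.
have [[u w_u] _] := apery_w.
exists (len u) => l; split => [[v [w_v ->]] | ->]; last by exists u.
apply: (coprime_lincomb_inj (rb_gt0 b n_gt0) co_ra).
- exact: apery_weight_lt n_gt0 apery_w w_v.
- exact: apery_weight_lt n_gt0 apery_w w_u.
by rewrite -!sum_Sgen -w_u -w_v.
Qed.
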